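(* Let $\mathcal{B}$ be a real Banach space having a pre-dual space $\mathcal{B}_*$, let $\nu_j\in\mathcal{B}_*$, $j\in\mathbb{N}_m$, be linearly independent and let $\mathbf{y}\in\mathbb{R}^m$. Then $\hat f\in\mathcal{B}$ is a solution of the minimum norm interpolation problem with data $\mathbf{y}$ if and only if $\hat f\in\mathcal{M}_{\mathbf{y}}$ and there exist $c_j\in\mathbb{R}$, $j\in\mathbb{N}_m$, such that $$\hat f\in\gamma\,\partial\|\cdot\|_{\mathcal{B}_*}\Big(\sum_{j\in\mathbb{N}_m}c_j\nu_j\Big),\qquad \gamma:=\Big\|\sum_{j\in\mathbb{N}_m}c_j\nu_j\Big\|_{\mathcal{B}_*}.$$
   Context: $\mathcal{B}$ is a real Banach space with dual $\mathcal{B}^*$ and pairing $\langle\nu,f\rangle_{\mathcal{B}}:=\nu(f)$; $\mathbb{N}_m:=\{1,\dots,m\}$; $\mathcal{L}(f):=[\langle\nu_j,f\rangle_{\mathcal{B}}:j\in\mathbb{N}_m]$, $\mathcal{M}_{\mathbf{y}}:=\{f\in\mathcal{B}:\mathcal{L}(f)=\mathbf{y}\}$; a solution of the minimum norm interpolation problem with data $\mathbf{y}$ is an $\hat f\in\mathcal{M}_{\mathbf{y}}$ with $\|\hat f\|_{\mathcal{B}}=\inf\{\|f\|_{\mathcal{B}}:f\in\mathcal{M}_{\mathbf{y}}\}$. A normed space $\mathcal{B}_*$ is a pre-dual space of $\mathcal{B}$ if $(\mathcal{B}_* )^*=\mathcal{B}$; $\mathcal{B}_*$ is regarded as a subspace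 of $\mathcal{B}^*$ via $\langle\nu,f\rangle_{\mathcal{B}}=\langle f,\nu\rangle_{\mathcal{B}_*}=f(\nu)$. For a convex $\phi$ on a real normed space $X$, $\partial\phi(x):=\{\mu\in X^*:\phi(z)-\phi(x)\ge\mu(z-x)\ \forall z\in X\}$; thus $\partial\|\cdot\|_{\mathcal{B}_*}(\nu)\subseteq\mathcal{B}$. *)

From HB Require Import structures.
From mathcomp Require Import all_boot all_order all_algebra.
From mathcomp Require Import all_classical all_reals all_analysis.
Set Implicit Arguments. Unset Strict Implicit. Unset Printing Implicit Defensive.
Import Order.TTheory GRing.Theory Num.Theory.
Import numFieldNormedType.Exports.
Local Open Scope classical_set_scope.
Local Open Scope ring_scope.

(* The Banach space B is realized as the (topological) dual of its pre-dual X: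
   B := { f : X -> R | f linear and continuous }, with the dual (operator) norm.
   The pairing <f, nu>_{B_*} = f nu. *)

Definition dual_space {R : realType} (X : normedModType R) : set (X -> R) :=
  [set f | (forall (a : R) (x y : X), f (a *: x + y) = a * f x + f y)
           /\ continuous f].
Arguments dual_space {R} X _.

Definition dual_norm (R : realType) (X : normedModType R) (f : X -> R) : R :=
  sup [set `|f x| | x in [set x : X | `|x| <= 1]].

Definition interp_set (R : realType) (X : normedModType R) (m : nat)
  (nu : 'I_m -> X) (y : 'I_m -> R) : set (X -> R) :=
  [set f | dual_space X f /\ forall j, f (nu j) = y j].

Definition is_mni_solution (R : realType) (X : normedModType R) (m : nat)
  (nu : 'I_m -> X) (y : 'I_m -> R) (fhat : X -> R) : Prop :=
  interp_set nu y fhat /\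
  dual_norm fhat = inf [set dual_norm g | g in interp_set nu y].

Definition subdiff {R : realType} {X : normedModType R} (phi : X -> R) (x : X)
  : set (X -> R) :=
  [set mu | dual_space X mu /\ forall z : X, mu (z - x) <= phi z - phi x].

Definition lin_indep (R : realType) (X : normedModType R) (m : nat)
  (nu : 'I_m -> X) : Prop :=
  forall c : 'I_m -> R, \sum_(j < m) c j *: nu j = 0 -> forall j, c j = 0.

From HB Require Import structures.
From mathcomp Require Import all_boot all_order all_algebra.
From mathcomp Require Import all_classical all_reals all_analysis.
From mathcomp Require Import ring lra.
Import Order.TTheory GRing.Theory Num.Theory.
Import numFieldNormedType.Exports.
Local Open Scope classical_set_scope.
Local Open Scope ring_scope.
Set Implicit Arguments. Unset Strict Implicit. Unset Printing Implicit Defensive.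

(* Sufficiency is elementary: such an [fhat] has norm [<= `|nu0|], while every
   interpolant [g] satisfies [g nu0 = fhat nu0 = `|nu0|^2].
   Necessity needs two general tools, developed first:
   - the Hahn-Banach extension theorem for functionals dominated by
     [s * `|x|], proved from Zorn's lemma on graphs of partial functionals;
   - finite dimensionality of the span of the [nu_j]: a continuous functional
     attains its norm on the unit ball of the span (compactness of the unit
     sphere of coefficient rows, using linear independence).
   If [fhat] attains its norm [s] on the span at [v0], extending [fhat] from
   the span with bound [s] gives an interpolant of norm [<= s]; minimality
   forces [dual_norm fhat = s], hence [fhat / s] is a subgradient at [s v0]. *)

Section DualSpace.
Context {R : realType} {X : normedModType R}.
Implicit Types (f g : X -> R) (x z : X).

Lemma dual_linear f : dual_space X f ->
  forall a x z, f (a *: x + z) = a * f x + f z.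
Proof. by case. Qed.

Lemma linear_fun0 g : (forall a x z, g (a *: x + z) = a * g x + g z) -> g 0 = 0.
Proof.
move=> /(_ 1 0 0); rewrite scale1r addr0 mul1r.
by move=> /(congr1 (fun t => t - g 0)); rewrite subrr addrK.
Qed.

Lemma dual0 f : dual_space X f -> f 0 = 0.
Proof. by move=> /dual_linear /linear_fun0. Qed.

Lemma dualZ f : dual_space X f -> forall a x, f (a *: x) = a * f x.
Proof. by move=> hf a x; rewrite -[a *: x]addr0 (dual_linear hf) (dual0 hf) addr0. Qed.

Lemma dualD f : dual_space X f -> forall x z, f (x + z) = f x + f z.
Proof. by move=> hf x z; rewrite -{1}[x]scale1r (dual_linear hf) mul1r. Qed.

Lemma dualB f : dual_space X f -> forall x z, f (x - z) = f x - f z.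
Proof. by move=> hf x z; rewrite (dualD hf) -scaleN1r (dualZ hf) mulN1r. Qed.

Lemma dual_sum f (m : nat) (nu : 'I_m -> X) (c : 'I_m -> R) : dual_space X f ->
  f (\sum_(j < m) c j *: nu j) = \sum_(j < m) c j * f (nu j).
Proof.
move=> hf; rewrite (big_morph f (dualD hf) (dual0 hf)).
by apply: eq_bigr => j _; rewrite (dualZ hf).
Qed.

End DualSpace.

Lemma lipschitz_continuous {R : realType} {V W : normedModType R} (f : V -> W) (k : R) :
  (forall x y, `|f x - f y| <= k * `|x - y|) -> continuous f.
Proof.
move=> fk x; apply/cvgrPdist_lt => e e0.
have k1 : 0 < `|k| + 1 by rewrite ltr_pwDr // normr_ge0.
near=> z.
have xz : `|x - z| < e / (`|k| + 1).
  by near: z; apply: (@cvgr_dist_lt _ _ _ _ _ id x); [exact: cvg_id | exact: divr_gt0].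
apply: le_lt_trans (fk x z) _; apply: le_lt_trans (ler_norm _) _.
rewrite normrM normr_id; apply: (@le_lt_trans _ _ ((`|k| + 1) * `|x - z|)).
  by rewrite ler_wpM2r // lerDl.
by rewrite -ltr_pdivlMl // mulrC.
Unshelve. all: by end_near.
Qed.

Section DualNorm.
Context {R : realType} {X : normedModType R}.
Implicit Types (f g : X -> R) (x z : X).

Lemma dominated_dual g (s : R) :
  (forall a x z, g (a *: x + z) = a * g x + g z) -> (forall x, g x <= s * `|x|) ->
  dual_space X g /\ forall x, `|g x| <= s * `|x|.
Proof.
move=> lin dom.
have g0 : g 0 = 0 := linear_fun0 lin.
have gB x z : g (x - z) = g x - g z.
  by rewrite -scaleN1r addrC lin mulN1r addrC.
have gbound x : `|g x| <= s * `|x|.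
  rewrite ler_norml dom andbT lerNl -[- g x]sub0r -g0 -gB sub0r.
  by apply: le_trans (dom _) _; rewrite normrN.
split => //; split => //; apply: (lipschitz_continuous (k := s)) => x z.
by rewrite -gB; apply: gbound.
Qed.

Lemma dual_bounded f : dual_space X f ->
  exists2 k, 0 < k & forall x, `|f x| <= k * `|x|.
Proof.
move=> hf; have := @cvgr_dist_lt _ _ _ _ _ f (f 0) (hf.2 0) 1 ltr01.
rewrite (dual0 hf) => /(_ (nbhs_filter 0)) /nbhs_ballP [e e0 he].
exists (2 / e); first by rewrite divr_gt0.
move=> x; have [->|x0] := eqVneq x 0; first by rewrite (dual0 hf) !normr0 mulr0.
have nx : 0 < `|x| by rewrite normr_gt0.
have r0 : 0 <= e / 2 / `|x| by rewrite !divr_ge0 // ltW.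
have : ball (0 : X) e ((e / 2 / `|x|) *: x).
  rewrite -ball_normE /ball_ /= sub0r normrN normrZ ger0_norm //.
  by rewrite divfK ?gt_eqF // ltr_pdivrMr // ltr_pMr // ltr1n.
move/he; rewrite /= sub0r normrN (dualZ hf) normrM ger0_norm // => hx.
rewrite -ler_pdivrMl ?divr_gt0 // invf_div.
have -> : e / 2 * `|f x| = (e / 2 / `|x| * `|f x|) * `|x| by field; rewrite gt_eqF.
by rewrite -[leRHS]mul1r ler_pM2r // ltW.
Qed.

Lemma dual_norm_has_sup f : dual_space X f ->
  has_sup [set `|f x| | x in [set x : X | `|x| <= 1]].
Proof.
move=> hf; have [k k0 hk] := dual_bounded hf; split.
  by exists `|f 0|, 0 => //=; rewrite normr0.
exists k => _ [x /= x1 <-]; apply: le_trans (hk x) _.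
by rewrite -[leRHS]mulr1 ler_pM2l.
Qed.

Lemma dual_norm_le f (b : R) :
  (forall x, `|x| <= 1 -> `|f x| <= b) -> dual_norm f <= b.
Proof.
move=> fb; apply: ge_sup; first by exists `|f 0|, 0 => //=; rewrite normr0.
by move=> _ [x /= x1 <-]; exact: fb.
Qed.

Lemma dual_norm_ub f : dual_space X f -> forall x, `|x| <= 1 -> `|f x| <= dual_norm f.
Proof. by move=> hf x x1; apply: sup_upper_bound (dual_norm_has_sup hf) _ _; exists x. Qed.

Lemma dual_norm_ge0 f : dual_space X f -> 0 <= dual_norm f.
Proof. by move=> hf; apply: le_trans (dual_norm_ub hf (x := 0) _); rewrite ?normr0. Qed.

Lemma dual_norm_bound f : dual_space X f -> forall x, `|f x| <= dual_norm f * `|x|.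
Proof.
move=> hf x; have [->|x0] := eqVneq x 0; first by rewrite (dual0 hf) !normr0 mulr0.
have nx : 0 < `|x| by rewrite normr_gt0.
have := dual_norm_ub hf (x := `|x|^-1 *: x).
have xi : 0 <= `|x|^-1 by rewrite invr_ge0 ltW.
rewrite normrZ ger0_norm // mulVf ?gt_eqF // lexx (dualZ hf) normrM ger0_norm //.
by rewrite ler_pdivrMl // mulrC => /(_ isT).
Qed.

End DualNorm.

Section HahnBanach.
Context {R : realType} {X : normedModType R}.
Variable s : R.
Hypothesis s_ge0 : 0 <= s.

(* The graph of a linear functional, defined on a subspace of [X], which is
   dominated by the sublinear functional [x |-> s * `|x|]. *)
Definition dominated_graph (G : set (X * R)) : Prop :=
  [/\ (forall a p q, G p -> G q -> G (a *: p.1 + q.1, a * p.2 + q.2)),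
      G (0, 0), (forall r, G (0, r) -> r = 0) &
      (forall p, G p -> p.2 <= s * `|p.1|)].

Lemma dominated_graphZ G : dominated_graph G ->
  forall a d r, G (d, r) -> G (a *: d, a * r).
Proof. by case=> lin G00 _ _ a d r Gdr; have := lin a _ _ Gdr G00; rewrite /= !addr0. Qed.

Lemma dominated_graph_functional G : dominated_graph G ->
  forall d r1 r2, G (d, r1) -> G (d, r2) -> r1 = r2.
Proof.
case=> lin _ G0 _ d r1 r2 h1 h2.
have := lin (-1) _ _ h1 h2; rewrite /= scaleN1r addNr mulN1r => /G0 /eqP.
by rewrite addrC subr_eq0 => /eqP.
Qed.

(* The admissible values [c] of an extension at a new direction [x0] form a
   nonempty interval; this is the heart of the Hahn-Banach theorem. *)
Lemma extension_value G (x0 : X) : dominated_graph G ->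
  exists c : R, (forall p, G p -> p.2 - s * `|p.1 - x0| <= c) /\
                (forall q, G q -> c <= s * `|q.1 + x0| - q.2).
Proof.
case=> lin G00 _ dom.
have gap p q : G p -> G q -> p.2 - s * `|p.1 - x0| <= s * `|q.1 + x0| - q.2.
  move=> Gp Gq; have := dom _ (lin 1 p q Gp Gq); rewrite /= scale1r mul1r.
  have : `|p.1 + q.1| <= `|p.1 - x0| + `|q.1 + x0|.
    by apply: le_trans (ler_normD _ _); rewrite addrACA addNr addr0.
  move=> /(ler_wpM2l s_ge0); rewrite mulrDr; lra.
pose L := [set p.2 - s * `|p.1 - x0| | p in G].
have L0 : L !=set0 by exists (0 - s * `|0 - x0|), (0, 0).
exists (sup L); split=> [p Gp|q Gq].
  apply: sup_upper_bound; last by exists p.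
  by split=> //; exists (s * `|0 + x0| - 0) => _ [p' Gp' <-]; exact: gap Gp' G00.
by apply: ge_sup => // _ [p Gp <-]; exact: gap Gp Gq.
Qed.

Definition graph_extend (G : set (X * R)) (x0 : X) (c : R) : set (X * R) :=
  [set z | exists p t, G p /\ z = (p.1 + t *: x0, p.2 + t * c)].

(* Domination of the extension in the directions [t >= 0]; the directions
   [t <= 0] follow by replacing [(x0, c)] with [(- x0, - c)]. *)
Lemma graph_extend_dominated_pos G (x0 : X) (c : R) : dominated_graph G ->
  (forall q, G q -> c <= s * `|q.1 + x0| - q.2) ->
  forall d r t, G (d, r) -> 0 <= t -> r + t * c <= s * `|d + t *: x0|.
Proof.
move=> hG cub d r t Gdr; rewrite le_eqVlt => /predU1P [<-|t0].
  by rewrite scale0r mul0r !addr0; case: hG => _ _ _ /(_ _ Gdr).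
have := cub _ (dominated_graphZ hG t^-1 Gdr); rewrite /= => ct.
have -> : d + t *: x0 = t *: (t^-1 *: d + x0).
  by rewrite scalerDr scalerA divff ?gt_eqF // scale1r.
rewrite normrZ gtr0_norm // mulrCA -subr_ge0.
have := ler_wpM2l (ltW t0) ct; rewrite mulrBr mulrA divff ?gt_eqF // mul1r.
lra.
Qed.

Lemma graph_extend_good G (x0 : X) : dominated_graph G ->
  ~ (exists r, G (x0, r)) ->
  exists c, [/\ dominated_graph (graph_extend G x0 c), G `<=` graph_extend G x0 c
                & graph_extend G x0 c (x0, c)].
Proof.
move=> hG x0G; have [c [clb cub]] := extension_value x0 hG.
have [lin G00 G0 dom] := hG.
have GE : G `<=` graph_extend G x0 c.
  by move=> [d r] Gdr; exists (d, r), 0; rewrite /= scale0r mul0r !addr0.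
exists c; split=> //; last by exists (0, 0), 1; rewrite /= scale1r mul1r !add0r.
split.
- move=> a _ _ [p1 [t1 [G1 ->]]] [p2 [t2 [G2 ->]]].
  exists (a *: p1.1 + p2.1, a * p1.2 + p2.2), (a * t1 + t2).
  split; first exact: lin.
  congr pair => /=; last by ring.
  by rewrite scalerDr scalerA scalerDl addrACA.
- exact: GE.
- move=> r [[d r0] [t [Gdr0 [e1 e2]]]].
  have [t0|tn0] := eqVneq t 0.
    by move: e1 e2; rewrite t0 scale0r mul0r !addr0 /= => d0 ->; apply: G0; rewrite d0.
  exfalso; apply: x0G; exists (- t^-1 * r0).
  have -> : x0 = - t^-1 *: d.
    apply: (scalerI tn0); rewrite scalerA mulrN divff // scaleN1r.
    by apply/eqP; rewrite -addr_eq0 addrC -e1.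
  exact: (dominated_graphZ hG).
- move=> _ [[d r] [t [Gdr ->]]] /=; have [t0|t0] := leP 0 t.
    exact: graph_extend_dominated_pos hG cub _ _ _ Gdr t0.
  have := @graph_extend_dominated_pos G (- x0) (- c) hG _ d r (- t) Gdr.
  rewrite mulrNN scaleNr scalerN opprK oppr_ge0; apply; last exact: ltW.
  by move=> p Gp; rewrite lerNl opprB; exact: clb.
Qed.

End HahnBanach.

Section HahnBanachExtension.
Context {R : realType} {X : normedModType R}.
Variable s : R.
Hypothesis s_ge0 : 0 <= s.
Variable G0 : set (X * R).
Hypothesis G0_dominated : dominated_graph s G0.

(* Dominated graphs extending [G0], together with the empty set so that the
   union of the empty chain is admissible (as required by [Zorn_bigcup]). *)
Definition admissible (G : set (X * R)) : Prop :=
  G = set0 \/ (dominated_graph s G /\ G0 `<=` G).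

Lemma admissible_dominated G z : admissible G -> G z ->
  dominated_graph s G /\ G0 `<=` G.
Proof. by case=> [->//|]. Qed.

Lemma admissible_chain_union (F : set (set (X * R))) :
  F `<=` admissible -> total_on F subset -> admissible (\bigcup_(G in F) G).
Proof.
move=> Fadm Ftot.
have [[G1 [FG1 [z1 G1z1]]]|Fempty] := pselect (exists G, F G /\ exists z, G z);
  last first.
  left; apply/seteqP; split=> // z [G FG Gz]; apply: Fempty.
  by exists G; split=> //; exists z.
have dom G z : F G -> G z -> dominated_graph s G.
  by move=> FG Gz; case: (admissible_dominated (Fadm _ FG) Gz).
have [hG1 G0G1] := admissible_dominated (Fadm _ FG1) G1z1.
right; split; last by move=> z /G0G1; exists G1.
split.
- move=> a p q [Gp FGp Gpp] [Gq FGq Gqq].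
  have [Gpq|Gqp] := Ftot _ _ FGp FGq.
  + by exists Gq => //; case: (dom _ _ FGq Gqq) => lin _ _ _; apply: lin => //; exact: Gpq.
  + by exists Gp => //; case: (dom _ _ FGp Gpp) => lin _ _ _; apply: lin => //; exact: Gqp.
- by exists G1 => //; case: hG1.
- by move=> r [G FG Gr]; case: (dom _ _ FG Gr) => _ _ G0r _; exact: G0r.
- by move=> p [G FG Gp]; case: (dom _ _ FG Gp) => _ _ _; apply.
Qed.

Lemma total_dominated_extension :
  exists G, [/\ dominated_graph s G, G0 `<=` G & forall x, exists r, G (x, r)].
Proof.
have [G [Gadm Gmax]] := Zorn_bigcup admissible_chain_union.
have [hG G0G] : dominated_graph s G /\ G0 `<=` G.
  case: Gadm => [G_empty|//]; exfalso; apply: (Gmax G0); last by right; split.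
  rewrite G_empty; split=> // sub; case: G0_dominated => _ G00 _ _.
  exact: sub _ G00.
exists G; split=> // x; apply: contrapT => Gx.
have [c [hGc GGc Gcx]] := graph_extend_good s_ge0 hG Gx.
apply: (Gmax (graph_extend G x c)); last by right; split=> //; exact: subset_trans GGc.
by split=> // cG; apply: Gx; exists c; exact: cG.
Qed.

Theorem hahn_banach : exists g : X -> R,
  [/\ (forall a x z, g (a *: x + z) = a * g x + g z),
      (forall x, g x <= s * `|x|) & (forall p, G0 p -> g p.1 = p.2)].
Proof.
have [G [hG G0G Gtotal]] := total_dominated_extension.
pose g x := xget 0 [set r | G (x, r)].
have gG x : G (x, g x) by apply: xgetPex (Gtotal x).
have gE x r : G (x, r) -> g x = r := dominated_graph_functional hG (gG x).
have [lin _ _ dom] := hG.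
exists g; split.
- by move=> a x z; apply: gE; exact: (lin a (x, g x) (z, g z)).
- by move=> x; exact: (dom _ (gG x)).
- by move=> [x r] /G0G; exact: gE.
Qed.

End HahnBanachExtension.

Lemma row_unit_sphere_compact (R : realType) (m : nat) :
  compact [set c : 'rV[R]_m | `|c| = 1].
Proof.
apply: bounded_closed_compact.
  by exists 1; split=> [|M M1 c Sc]; [exact: num_real | rewrite /= Sc ltW].
apply: (@preimage_closed _ _ (fun c : 'rV[R]_m => `|c|) [set x : R | x = 1]);
  last exact: closed_eq.
by move=> ? _; exact: norm_continuous.
Qed.

Section FiniteSpan.
Context {R : realType} {X : normedModType R} (m : nat) (nu : 'I_m -> X).

Definition span_map (c : 'rV[R]_m) : X := \sum_(j < m) c ord0 j *: nu j.

Lemma span_map_linear a c d :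
  span_map (a *: c + d) = a *: span_map c + span_map d.
Proof.
rewrite /span_map scaler_sumr -big_split /=; apply: eq_bigr => j _.
by rewrite !mxE scalerDl scalerA.
Qed.

Lemma span_map0 : span_map 0 = 0.
Proof. by rewrite /span_map big1 // => j _; rewrite mxE scale0r. Qed.

Lemma span_mapZ a c : span_map (a *: c) = a *: span_map c.
Proof. by rewrite -[a *: c]addr0 span_map_linear span_map0 addr0. Qed.

Lemma span_mapB c d : span_map (c - d) = span_map c - span_map d.
Proof. by rewrite -scaleN1r addrC span_map_linear scaleN1r addrC. Qed.

Lemma span_map_delta j : span_map (\row_i ((i == j)%:R : R)) = nu j.
Proof.
rewrite /span_map (bigD1 j) //= mxE eqxx scale1r big1 ?addr0 // => i /negbTE ij.
by rewrite mxE ij scale0r.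
Qed.

Lemma span_map_continuous : continuous span_map.
Proof.
apply: (lipschitz_continuous (k := \sum_(j < m) `|nu j|)) => c d.
rewrite -span_mapB /span_map mulr_suml; apply: le_trans (ler_norm_sum _ _ _) _.
apply: ler_sum => j _; rewrite normrZ mulrC ler_wpM2l //.
by rewrite [leRHS]mx_normrE; apply/bigmax_geP; right; exists (ord0, j).
Qed.

Hypothesis nu_indep : lin_indep nu.

Lemma span_map_eq0 c : span_map c = 0 -> c = 0.
Proof. by move=> /nu_indep c0; apply/rowP => j; rewrite mxE c0. Qed.

(* We maximise the ratio
   [f v / `|v|] over the (compact) unit sphere of coefficient rows. *)
Lemma span_norm_attained (f : X -> R) : dual_space X f ->
  exists c, `|span_map c| <= 1 /\
    forall d, f (span_map d) <= f (span_map c) * `|span_map d|.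
Proof.
move=> hf; pose S := [set c : 'rV[R]_m | `|c| = 1].
pose ratio c := f (span_map c) / `|span_map c|.
have normalize d : d != 0 -> S (`|d|^-1 *: d).
  move=> d0; rewrite /S /= normrZ ger0_norm ?invr_ge0 //.
  by rewrite mulVf // normr_eq0.
have ratioZ a d : 0 < a -> ratio (a *: d) = ratio d.
  move=> a0; rewrite /ratio span_mapZ (dualZ hf) normrZ gtr0_norm //.
  by rewrite invfM mulrACA divff ?gt_eqF // mul1r.
have S_span_neq0 c : S c -> span_map c != 0.
  move=> Sc; apply/eqP => /span_map_eq0 c0; move: Sc.
  by rewrite /S /= c0 normr0 => /eqP; rewrite eq_sym oner_eq0.
have [S0|Sempty] := pselect (S !=set0); last first.
  exists 0; rewrite span_map0 normr0 ler01; split=> // d.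
  have [->|d0] := eqVneq d 0; first by rewrite span_map0 normr0 mulr0 (dual0 hf).
  by exfalso; apply: Sempty; exists (`|d|^-1 *: d); apply: normalize.
have ratio_cont : {within S, continuous ratio}.
  apply: continuous_in_subspaceT => c /set_mem Sc.
  apply: (@continuousM _ _ (fun c => f (span_map c)) (fun c => `|span_map c|^-1));
    first by apply: continuous_comp; [exact: span_map_continuous | exact: hf.2].
  apply: continuousV; first by rewrite normr_eq0 S_span_neq0.
  by apply: continuous_comp; [exact: span_map_continuous | exact: norm_continuous].
have [c0 /set_mem Sc0 c0max] := compact_EVT_max S0 (@row_unit_sphere_compact R m) ratio_cont.
have nc0 : 0 < `|span_map c0| by rewrite normr_gt0 S_span_neq0.
exists (`|span_map c0|^-1 *: c0).
have inv_ge0 : 0 <= `|span_map c0|^-1 by rewrite invr_ge0 ltW.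
rewrite span_mapZ normrZ ger0_norm // mulVf ?gt_eqF // lexx.
split=> // d; have [Ld0|Ldn0] := eqVneq (span_map d) 0.
  by rewrite Ld0 (dual0 hf) normr0 mulr0.
have d0 : d != 0 by apply: contraNneq Ldn0 => ->; rewrite span_map0.
have nd : 0 < `|span_map d| by rewrite normr_gt0.
have := c0max _ (mem_set (normalize _ d0)).
rewrite ratioZ ?invr_gt0 ?normr_gt0 // /ratio ler_pdivrMr //.
by rewrite (dualZ hf) [_^-1 * _]mulrC.
Qed.

End FiniteSpan.

Lemma inf_min {R : realType} (S : set R) (x : R) : S x -> lbound S x -> inf S = x.
Proof.
move=> Sx xS; apply/eqP; rewrite eq_le lb_le_inf ?andbT //; last by exists x.
by apply: ge_inf => //; exists x.
Qed.

Section MinNormInterpolation.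
Context {R : realType} {X : normedModType R} (m : nat) (nu : 'I_m -> X) (y : 'I_m -> R).

Lemma norm_subgradient (v : X) (mu : X -> R) : subdiff (fun x : X => `|x|) v mu ->
  mu v = `|v| /\ forall z, `|mu z| <= `|z|.
Proof.
move=> [hmu sub]; have mu_v : mu v = `|v|.
  apply/eqP; rewrite eq_le; apply/andP; split.
    by have := sub (v + v); rewrite addrK -mulr2n normrMn; lra.
  by have := sub 0; rewrite sub0r -scaleN1r (dualZ hmu) normr0; lra.
split=> // z; have mu_le w : mu w <= `|w| by have := sub w; rewrite (dualB hmu); lra.
rewrite ler_norml mu_le andbT lerNl -mulN1r -(dualZ hmu) scaleN1r.
by rewrite -(normrN z) mu_le.
Qed.

Lemma normalized_subgradient (f : X -> R) (s : R) (v0 : X) :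
  dual_space X f -> 0 < s -> dual_norm f <= s -> f v0 = s -> `|v0| = 1 ->
  subdiff (fun x : X => `|x|) (s *: v0) (fun x => f x / s).
Proof.
move=> hf s0 fs fv0 v01; split.
  split=> [a x z|]; first by rewrite (dual_linear hf) mulrDl mulrA.
  apply: (lipschitz_continuous (k := dual_norm f / s)) => x z.
  have si : 0 <= s^-1 by rewrite invr_ge0 ltW.
  rewrite -mulrBl -(dualB hf) normrM (ger0_norm si) mulrAC ler_wpM2r //.
  exact: dual_norm_bound.
move=> z; rewrite normrZ v01 mulr1 gtr0_norm // (dualB hf) (dualZ hf) fv0.
rewrite mulrBl mulfK ?gt_eqF // lerD2r ler_pdivrMr // mulrC.
by apply: le_trans (ler_norm _) _; apply: le_trans (dual_norm_bound hf z) _; rewrite ler_wpM2r.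
Qed.

Lemma interp_norm_lbound : has_lbound [set dual_norm g | g in interp_set nu y].
Proof. by exists 0 => _ [g [hg _] <-]; exact: dual_norm_ge0. Qed.

(* Sufficiency: a rescaled subgradient at [sum_j c_j nu_j] that interpolates
   the data has minimal norm, since every interpolant [g] satisfies
   [g nu0 = fhat nu0 = `|nu0|^2]. *)
Lemma mni_sufficient (fhat mu : X -> R) (c : 'I_m -> R) :
  let nu0 := \sum_(j < m) c j *: nu j in
  interp_set nu y fhat -> subdiff (fun x : X => `|x|) nu0 mu ->
  fhat = (fun x => `|nu0| * mu x) -> is_mni_solution nu y fhat.
Proof.
move=> nu0 fint /norm_subgradient [mu_nu0 mu_le] fhatE; split=> //.
have [hf fy] := fint; have nu0_ge0 : 0 <= `|nu0| := normr_ge0 _.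
have fhat_norm : dual_norm fhat <= `|nu0|.
  apply: dual_norm_le => x x1; rewrite fhatE normrM ger0_norm //.
  by rewrite -[leRHS]mulr1 ler_wpM2l // (le_trans (mu_le x)).
apply/esym/inf_min; first by exists fhat.
move=> _ [g [hg gy] <-]; apply: le_trans fhat_norm _.
have [nu00|nu0_neq0] := eqVneq `|nu0| 0; first by rewrite nu00 dual_norm_ge0.
have g_nu0 : g nu0 = `|nu0| * `|nu0|.
  have -> : g nu0 = fhat nu0.
    by rewrite /nu0 !dual_sum //; apply: eq_bigr => j _; rewrite gy fy.
  by rewrite fhatE mu_nu0.
have nu0_pos : 0 < `|nu0| by rewrite lt_neqAle eq_sym nu0_neq0.
by rewrite -(ler_pM2r nu0_pos) -g_nu0 (le_trans (ler_norm _)) ?dual_norm_bound.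
Qed.

Lemma interpolant_from_span_bound (fhat : X -> R) (s : R) :
  interp_set nu y fhat -> 0 <= s ->
  (forall d, fhat (span_map nu d) <= s * `|span_map nu d|) ->
  exists2 g, interp_set nu y g & dual_norm g <= s.
Proof.
move=> [hf fy] s0 fs.
pose G0 := [set p : X * R | exists d, p = (span_map nu d, fhat (span_map nu d))].
have G0_dom : dominated_graph s G0.
  split.
  - move=> a _ _ [d1 ->] [d2 ->]; exists (a *: d1 + d2).
    by rewrite /= span_map_linear (dual_linear hf).
  - by exists 0; rewrite span_map0 (dual0 hf).
  - by move=> r [d [e ->]]; rewrite -e (dual0 hf).
  - by move=> _ [d ->]; exact: fs.
have [g [glin gdom gG0]] := hahn_banach s0 G0_dom.
have [hg gbound] := dominated_dual glin gdom.
exists g.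
  split=> // j; rewrite -fy -(span_map_delta nu j).
  by apply: (gG0 (_, _)); exists (\row_i ((i == j)%:R : R)).
apply: dual_norm_le => x x1; apply: le_trans (gbound x) _.
by rewrite -[leRHS]mulr1 ler_wpM2l.
Qed.

(* Necessity: let [v0] be a point of the unit ball of the span where [fhat]
   attains its norm [s] on the span.  Extending [fhat] from the span with the
   bound [s] gives an interpolant of norm [<= s], so minimality forces
   [dual_norm fhat = s]; then [fhat / s] is a subgradient at [s v0]. *)
Lemma mni_necessary (fhat : X -> R) : lin_indep nu -> is_mni_solution nu y fhat ->
  exists c : 'I_m -> R, exists mu : X -> R,
    subdiff (fun x : X => `|x|) (\sum_(j < m) c j *: nu j) mu /\
    fhat = (fun x => `|\sum_(j < m) c j *: nu j| * mu x).
Proof.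
move=> nu_indep [fint fmin]; have [hf _] := fint.
have [cs [v0_le1 fv0]] := span_norm_attained nu_indep hf.
set v0 := span_map nu cs in v0_le1 fv0; set s := fhat v0 in fv0.
have s_ge0 : 0 <= s.
  have := fv0 (- cs); rewrite -scaleN1r span_mapZ (dualZ hf) normrZ normrN1 mul1r.
  by have := normr_ge0 v0; rewrite -/v0 -/s; nra.
have [g gint gs] := interpolant_from_span_bound fint s_ge0 fv0.
have fhat_le : dual_norm fhat <= s.
  by rewrite fmin; apply: le_trans gs; apply: ge_inf; [exact: interp_norm_lbound | exists g].
have [s0|s_neq0] := eqVneq s 0.
  have fhat0 x : fhat x = 0.
    apply/eqP; rewrite -normr_le0 (le_trans (dual_norm_bound hf x)) //.
    by rewrite mulr_le0_ge0 // -s0.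
  exists (fun=> 0), (fun=> 0); rewrite big1 => [|j _]; last by rewrite scale0r.
  split; last by apply: funext => x; rewrite fhat0 normr0 mul0r.
  split; last by move=> z; rewrite normr0 subr0 normr_ge0.
  by split=> [a x z|]; [rewrite mulr0 addr0 | exact: cst_continuous].
have s_gt0 : 0 < s by rewrite lt_neqAle eq_sym s_neq0.
have v0_unit : `|v0| = 1.
  apply/eqP; rewrite eq_le v0_le1 -(ler_pM2l s_gt0) mulr1 /=.
  apply: le_trans (ler_norm _) (le_trans (dual_norm_bound hf v0) _).
  by rewrite ler_wpM2r.
exists (fun j => s * cs ord0 j), (fun x => fhat x / s).
have -> : \sum_(j < m) (s * cs ord0 j) *: nu j = s *: v0.
  by rewrite scaler_sumr; apply: eq_bigr => j _; rewrite scalerA.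
split; first exact: normalized_subgradient.
by apply: funext => x; rewrite normrZ v0_unit mulr1 gtr0_norm // mulrC divfK.
Qed.

End MinNormInterpolation.

Unset Implicit Arguments.

Theorem mainTheorem7 (R : realType) (X : normedModType R) (m : nat)
  (nu : 'I_m -> X) (y : 'I_m -> R) (fhat : X -> R) :
  lin_indep nu -> dual_space X fhat ->
  (is_mni_solution nu y fhat <->
   (interp_set nu y fhat /\
    exists c : 'I_m -> R,
      let nu0 := \sum_(j < m) c j *: nu j in
      exists mu : X -> R,
        subdiff (fun v : X => `|v|) nu0 mu /\
        fhat = (fun x : X => `|nu0| * mu x))).
Proof.
move=> nu_indep _; split=> [fsol|[fint [c [mu [mu_sub fhatE]]]]].
  split; first exact: fsol.1.
  by have [c [mu [mu_sub fhatE]]] := mni_necessary nu_indep fsol; exists c, mu.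
exact: mni_sufficient fint mu_sub fhatE.
Qed.
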